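(* Let $q$ be a prime power, $n\ge2$, and let $r_1,r_2$ be positive divisors of $n$ with $\gcd(r_1,r_2)=1$. Let $\alpha=ab$ with $a\in\mathbb{F}_{q^{r_1}}^*$ and $b\in\mathbb{F}_{q^{r_2}}^*$, and consider in $\mathrm{PG}(1,q^n)$ \[L_{r_1}=\{\langle (x,\mathrm{Tr}_{q^n/q^{r_1}}(x))\rangle_{\mathbb{F}_{q^n}}\colon x\in\mathbb{F}_{q^n}^*\},\qquad L_{r_2}=\{\langle (x,\alpha\,\mathrm{Tr}_{q^n/q^{r_2}}(x))\rangle_{\mathbb{F}_{q^n}}\colon x\in\mathbb{F}_{q^n}^*\},\] with common head $H=\langle(1,0)\rangle_{\mathbb{F}_{q^n}}$. Then $L_{r_1}$ and $L_{r_2}$ share at least one point other than $H$ if and only if there exist $\gamma_1,\gamma_2\in\mathbb{F}_{q^n}$ such that $\mathrm{Tr}_{q^n/q^{r_1}}(\gamma_1)=\mathrm{Tr}_{q^n/q^{r_2}}(\gamma_2)=1$ and $\mathrm{Tr}_{q^n/q}\!\left(a\gamma_1-\frac{\gamma_2}{b}\right)=0$.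
   Context: For a divisor $r$ of $n$, $\mathrm{Tr}_{q^n/q^r}(x)=\sum_{i=0}^{n/r-1}x^{q^{ir}}$. *)

From HB Require Import structures.
From mathcomp Require Import all_boot all_order all_algebra all_field.
Set Implicit Arguments. Unset Strict Implicit. Unset Printing Implicit Defensive.
Import GRing.Theory.
Local Open Scope ring_scope.

Definition prime_power (q : nat) : Prop :=
  exists p k : nat, prime p /\ (0 < k)%N /\ q = (p ^ k)%N.

Definition relTr (F : fieldType) (q n r : nat) (x : F) : F :=
  \sum_(i < n %/ r) x ^+ (q ^ (i * r)).

Definition same_point (F : fieldType) (u v : F * F) : Prop :=
  u != (0, 0) /\ v != (0, 0) /\ exists lam : F, lam != 0 /\ u = (lam * v.1, lam * v.2).

(* The linear set L = { <(x, c * Tr_{q^n/q^r}(x))> : x in F^* },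
   as a predicate on representative vectors. *)
Definition in_linset (F : fieldType) (q n r : nat) (c : F) (P : F * F) : Prop :=
  exists x : F, x != 0 /\ same_point P (x, c * relTr q n r x).

From HB Require Import structures.
From mathcomp Require Import all_boot all_order all_algebra all_field.
From mathcomp Require Import ring zify.
Import GRing.Theory.
Local Open Scope ring_scope.

(* Throughout, F is the field with q^n elements, q a prime power, and
   Tr_r := relTr q n r is the relative trace Tr_{q^n/q^r}.

   1. The maps x |-> x^(q^k) are additive, and x^(q^n) = x; hence Tr_r is
      additive, F_{q^r}-linear, takes values in F_{q^r} and kills the
      defects u^(q^r) - u.
   2. Additive Hilbert 90: the kernel of Tr_1 = Tr_{q^n/q} is exactly the image
      of z |-> z^q - z.  The image has at least q^(n-1) elements (fibres are
      cosets of F_q) while the kernel, the root set of a polynomial of degree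
      q^(n-1), has at most that many.
   3. If gcd(r1, r2) = 1 then ker Tr_1 = ker Tr_{r1} + ker Tr_{r2}: the set of
      k for which all defects w^(q^k) - w lie in the sum is closed under
      addition and contains r1 and r2, and by Bezout it contains 1 modulo n.
   4. Geometrically, L_{r1} and L_{r2} meet outside H iff there are g1, g2
      with Tr_{r1}(g1) = Tr_{r2}(g2) = 1 and a g1 = g2 / b.  Such g1, g2 give
      trace 0 trivially; conversely, splitting a g1 - g2/b by step 3 corrects
      g1 and g2 to a pair with a g1 = g2 / b. *)

Lemma same_point_slope {K : fieldType} {u v : K * K} :
  u.2 != 0 -> same_point u v <-> v.2 != 0 /\ u.1 / u.2 = v.1 / v.2.
Proof.
case: u v => [x s] [y t] /= s_neq0; split.
- case=> _ [_ [lam [lam_neq0 [-> s_eq]]]].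
  have t_neq0 : t != 0 by apply: contraNneq s_neq0; rewrite s_eq => ->; rewrite mulr0.
  by split=> //; rewrite s_eq -mulf_div divff // mul1r.
- case=> t_neq0 slope; split; [|split].
  + by apply/eqP => -[_ s0]; rewrite s0 eqxx in s_neq0.
  + by apply/eqP => -[_ t0]; rewrite t0 eqxx in t_neq0.
  exists (s / t); split; first by rewrite mulf_neq0 ?invr_eq0.
  rewrite /= divfK //; congr (_, _).
  by rewrite -[LHS](divfK s_neq0) slope; ring.
Qed.

Lemma same_point_head {K : fieldType} {u : K * K} :
  u != (0, 0) -> same_point u (1, 0) <-> u.2 = 0.
Proof.
case: u => x s /= u_neq0; split; first by case=> _ [_ [lam [_ [_ ->]]]]; rewrite mulr0.
move=> s0; rewrite s0 in u_neq0 *; split=> //; split.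
  by apply/eqP => -[/eqP]; rewrite oner_eq0.
exists x; split; last by rewrite mulr1 mulr0.
by apply: contraNneq u_neq0 => ->.
Qed.

Lemma card_roots_lt (R : finIdomainType) (p : {poly R}) (A : {set R}) :
  p != 0 -> {in A, forall x, root p x} -> (#|A| < size p)%N.
Proof.
move=> p_neq0 rootA; rewrite cardE; apply: max_poly_roots => //; last exact: enum_uniq.
by apply/allP => x; rewrite mem_enum; apply: rootA.
Qed.

Section FiniteField.
Context {F : finFieldType} {q n : nat}.
Hypotheses (q_pp : prime_power q) (cardF : #|F| = (q ^ n)%N).

Lemma q_gt1 : (1 < q)%N.
Proof.
case: q_pp => p [e [p_prime [e_gt0 ->]]].
by apply: leq_trans (prime_gt1 p_prime) _; rewrite -{1}(expn1 p) leq_exp2l ?prime_gt1.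
Qed.

Lemma n_gt0 : (0 < n)%N.
Proof. by have := card_finNzRing_gt1 F; rewrite cardF; case: n. Qed.

(* q is a power of the characteristic, so every x |-> x^(q^k) is additive. *)
Lemma frobD k (x y : F) : (x + y) ^+ (q ^ k) = x ^+ (q ^ k) + y ^+ (q ^ k).
Proof.
case: q_pp cardF => p [e [p_prime [_ ->]]] cardF'.
have pcharF := card_finPcharP (etrans cardF' (esym (expnM p e n))) p_prime.
by apply: exprDn_pchar; rewrite -expnM pnatX pnatE // pcharF.
Qed.

Lemma frob0 k : (0 : F) ^+ (q ^ k) = 0.
Proof. by rewrite expr0n expn_eq0 eqn0Ngt (ltnW q_gt1). Qed.

Lemma frobN k (x : F) : (- x) ^+ (q ^ k) = - x ^+ (q ^ k).
Proof. by apply/eqP; rewrite -addr_eq0 -frobD addNr frob0. Qed.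

Lemma frob_sum k m (g : 'I_m -> F) :
  (\sum_(i < m) g i) ^+ (q ^ k) = \sum_(i < m) g i ^+ (q ^ k).
Proof. exact: (big_morph _ (frobD k) (frob0 k)). Qed.

(* x^(q^n) = x: exponents of q only matter modulo n. *)
Lemma frob_period k j (x : F) : x ^+ (q ^ (k + n * j)) = x ^+ (q ^ k).
Proof.
elim: j => [|j IH]; first by rewrite muln0 addn0.
by rewrite mulnS addnCA expnD exprM -cardF expf_card IH.
Qed.

Lemma relTrD r (x y : F) : relTr q n r (x + y) = relTr q n r x + relTr q n r y.
Proof. by rewrite /relTr -big_split; apply: eq_bigr => i _; rewrite frobD. Qed.

Lemma relTr0 r : relTr q n r (0 : F) = 0.
Proof. by rewrite /relTr big1 // => i _; rewrite frob0. Qed.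

Lemma relTrN r (x : F) : relTr q n r (- x) = - relTr q n r x.
Proof. by rewrite /relTr -sumrN; apply: eq_bigr => i _; rewrite frobN. Qed.

Lemma relTrB r (x y : F) : relTr q n r (x - y) = relTr q n r x - relTr q n r y.
Proof. by rewrite relTrD relTrN. Qed.

Lemma relTrZ r (c x : F) : c ^+ (q ^ r) = c -> relTr q n r (c * x) = c * relTr q n r x.
Proof.
move=> c_fixed; rewrite /relTr mulr_sumr; apply: eq_bigr => i _.
rewrite exprMn; congr (_ * _); elim: (nat_of_ord i) => [|j IH]; first by rewrite mul0n expr1.
by rewrite mulSn expnD exprM c_fixed IH.
Qed.

Section RelativeTrace.
Variable r : nat.
Hypotheses (r_gt0 : (0 < r)%N) (r_dvd_n : (r %| n)%N).

(* Tr_r is invariant under x |-> x^(q^r): this map permutes the terms cyclically. *)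
Lemma relTr_frob (u : F) : relTr q n r (u ^+ (q ^ r)) = relTr q n r u.
Proof.
rewrite /relTr; have : (n %/ r * r)%N = n by rewrite divnK.
have : (0 < n %/ r)%N by rewrite divn_gt0 // dvdn_leq // n_gt0.
case: (n %/ r)%N => // m _ nE.
rewrite big_ord_recr big_ord_recl /= mul0n expn0 expr1 addrC -exprM -expnD.
rewrite -mulSn nE -cardF expf_card; congr (_ + _).
by apply: eq_bigr => i _; rewrite -exprM -expnD -mulSn /bump leq0n add1n.
Qed.

Lemma relTr_fixed (u : F) : (relTr q n r u) ^+ (q ^ r) = relTr q n r u.
Proof.
rewrite -[RHS]relTr_frob /relTr frob_sum.
by apply: eq_bigr => i _; rewrite -!exprM mulnC.
Qed.

Lemma relTr_defect (u : F) : relTr q n r (u ^+ (q ^ r) - u) = 0.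
Proof. by rewrite relTrB relTr_frob subrr. Qed.

Lemma relTr_normalize (x : F) : relTr q n r x != 0 -> relTr q n r (x / relTr q n r x) = 1.
Proof. by move=> T_neq0; rewrite mulrC relTrZ ?mulVf // exprVn relTr_fixed. Qed.

End RelativeTrace.

Section AdditiveHilbert90.

Lemma card_frob_fixed : (#|[set z : F | z ^+ q == z]| <= q)%N.
Proof.
have size_p : size ('X^q - 'X : {poly F}) = q.+1.
  by rewrite size_polyDl size_polyXn // size_polyN size_polyX ltnS q_gt1.
rewrite -ltnS -size_p; apply: card_roots_lt; first by rewrite -size_poly_eq0 size_p.
by move=> x; rewrite inE /root hornerD hornerN hornerXn hornerX subr_eq0.
Qed.

(* ker Tr_{q^n/q} is the root set of sum_(i < n) X^(q^i), of degree q^(n-1). *)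
Lemma card_trace_kernel : (#|[set d : F | relTr q n 1 d == 0%R]| <= q ^ n.-1)%N.
Proof.
pose p : {poly F} := \sum_(i < n) 'X^(q ^ i).
have p_eval x : p.[x] = relTr q n 1 x.
  by rewrite /p horner_sum /relTr divn1; apply: eq_bigr => i _; rewrite hornerXn muln1.
have size_p : size p = (q ^ n.-1).+1.
  rewrite /p; case: n n_gt0 => // m _ /=; rewrite big_ord_recr /= addrC.
  rewrite size_polyDl size_polyXn //; apply: leq_ltn_trans (size_sum _ _ _) _.
  by rewrite ltnS; apply/bigmax_leqP => i _; rewrite size_polyXn ltn_exp2l ?q_gt1.
rewrite -ltnS -size_p; apply: card_roots_lt; first by rewrite -size_poly_eq0 size_p.
by move=> x; rewrite inE /root p_eval.
Qed.

(* The Artin-Schreier map z |-> z^q - z has kernel F_q, so its image is large: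
   z |-> (z^q - z, z - s(z^q - z)) injects F into image * F_q for a section s. *)
Lemma card_artin_schreier_image : (q ^ n.-1 <= #|[set (z ^+ q - z)%R | z : F]|)%N.
Proof.
set f := fun z : F => z ^+ q - z; set I := [set f z | z : F].
pose s y := odflt 0 [pick z | f z == y].
have fs z : f (s (f z)) = f z by rewrite /s; case: pickP => [z' /eqP | /(_ z)]; rewrite ?eqxx.
pose h z := (f z, z - s (f z)).
have h_inj : injective h.
  by move=> z z' [fE]; rewrite fE => /(congr1 (+%R^~ (s (f z')))); rewrite !subrK.
have h_sub : h @: [set: F] \subset setX I [set z : F | z ^+ q == z].
  apply/subsetP => _ /imsetP [z _ ->]; rewrite !inE /= imset_f //=.
  have := fs z; rewrite /f; set w := s _ => fw.
  have := frobD 1 z (- w); rewrite frobN expn1 => ->; apply/eqP.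
  by rewrite -[z ^+ q](subrK z) -fw; ring.
have := subset_leq_card h_sub; rewrite card_imset // cardsX cardsT cardF => card_F.
rewrite -(@leq_pmul2r q) ?(ltnW q_gt1) // -expnSr prednK ?n_gt0 //.
by apply: (leq_trans card_F); rewrite leq_mul2l card_frob_fixed orbT.
Qed.

Lemma hilbert90 (d : F) : relTr q n 1 d = 0 -> exists z : F, d = z ^+ q - z.
Proof.
move=> trace_d; set I := [set z ^+ q - z | z : F].
have I_sub : I \subset [set d : F | relTr q n 1 d == 0].
  by apply/subsetP => _ /imsetP [z _ ->]; rewrite inE -{1}(expn1 q) relTr_defect.
have card_I : #|I| = #|[set d : F | relTr q n 1 d == 0]|.
  apply/eqP; rewrite eqn_leq subset_leq_card //=.
  exact: leq_trans card_trace_kernel card_artin_schreier_image.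
have := subset_cardP card_I I_sub => /(_ d); rewrite inE trace_d eqxx.
by move=> /imsetP [z _ ->]; exists z.
Qed.

End AdditiveHilbert90.

Section TraceKernelSum.
Context {r1 r2 : nat}.
Hypotheses (r1_gt0 : (0 < r1)%N) (r2_gt0 : (0 < r2)%N).
Hypotheses (r1_dvd_n : (r1 %| n)%N) (r2_dvd_n : (r2 %| n)%N) (r12_coprime : coprime r1 r2).

Definition kernel_sum (d : F) : Prop :=
  exists u1 u2 : F, relTr q n r1 u1 = 0 /\ relTr q n r2 u2 = 0 /\ d = u1 + u2.

Lemma kernel_sumD d e : kernel_sum d -> kernel_sum e -> kernel_sum (d + e).
Proof.
move=> [u1 [u2 [h1 [h2 ->]]]] [v1 [v2 [k1 [k2 ->]]]].
exists (u1 + v1), (u2 + v2); rewrite !relTrD h1 h2 k1 k2 !addr0.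
by do 2!split=> //; rewrite addrACA.
Qed.

Definition defects_in_sum (k : nat) : Prop := forall w : F, kernel_sum (w ^+ (q ^ k) - w).

Lemma defects_in_sum0 : defects_in_sum 0.
Proof.
by move=> w; rewrite expn0 expr1 subrr; exists 0, 0; rewrite !relTr0 addr0.
Qed.

Lemma defects_in_sumD {k m : nat} : defects_in_sum k -> defects_in_sum m -> defects_in_sum (k + m).
Proof.
move=> Dk Dm w.
have -> : w ^+ (q ^ (k + m)) - w =
          ((w ^+ (q ^ m)) ^+ (q ^ k) - w ^+ (q ^ m)) + (w ^+ (q ^ m) - w).
  by rewrite -exprM -expnD addnC addrA subrK.
exact: kernel_sumD.
Qed.

Lemma defects_in_sumM (c : nat) {k : nat} : defects_in_sum k -> defects_in_sum (c * k).
Proof.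
move=> Dk; elim: c => [|c IH]; first exact: defects_in_sum0.
by rewrite mulSn; apply: defects_in_sumD.
Qed.

(* By Bezout, 1 is congruent modulo n to a nonnegative combination of r1 and r2. *)
Lemma defects_in_sum1 : defects_in_sum 1.
Proof.
have [km kn] := egcdnP r2 r1_gt0; rewrite (eqP r12_coprime) => bezout _.
have D1 : defects_in_sum r1.
  by move=> w; exists (w ^+ (q ^ r1) - w), 0; rewrite relTr_defect // relTr0 addr0.
have D2 : defects_in_sum r2.
  by move=> w; exists 0, (w ^+ (q ^ r2) - w); rewrite relTr_defect // relTr0 add0r.
have comb_eq : (km * r1 + n.-1 * kn * r2 = 1 + n * (kn * r2))%N.
  by have := n_gt0; case: n => // m _; rewrite bezout /=; lia.
have := defects_in_sumD (defects_in_sumM km D1) (defects_in_sumM (n.-1 * kn) D2).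
by rewrite comb_eq => D w; have := D w; rewrite frob_period.
Qed.

Lemma trace_kernel_decomp (d : F) : relTr q n 1 d = 0 -> kernel_sum d.
Proof. by move=> /hilbert90 [z ->]; have := defects_in_sum1 z; rewrite expn1. Qed.

End TraceKernelSum.

Lemma common_point_iff r1 r2 (a b : F) :
  (0 < r1)%N -> (0 < r2)%N -> (r1 %| n)%N -> (r2 %| n)%N -> a != 0 -> b != 0 ->
  (exists P : F * F,
      in_linset q n r1 1 P /\ in_linset q n r2 (a * b) P /\ ~ same_point P (1, 0))
  <->
  (exists g1 g2 : F, relTr q n r1 g1 = 1 /\ relTr q n r2 g2 = 1 /\ a * g1 = g2 / b).
Proof.
move=> r1_gt0 r2_gt0 r1_dvd r2_dvd a_neq0 b_neq0; split.
- case=> P [[x [_ Px]] [[y [_ Py]] off_head]].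
  have P2_neq0 : P.2 != 0.
    by apply/eqP => P2; apply: off_head; apply/same_point_head => //; case: Px.
  move/(same_point_slope P2_neq0): Px => /= [T1_neq0 slope1].
  move/(same_point_slope P2_neq0): Py => /= [abT2_neq0 slope2].
  rewrite mul1r in T1_neq0 slope1.
  have T2_neq0 : relTr q n r2 y != 0 by apply: contraNneq abT2_neq0 => ->; rewrite mulr0.
  exists (x / relTr q n r1 x), (y / relTr q n r2 y).
  split; first by apply: relTr_normalize.
  split; first by apply: relTr_normalize.
  by rewrite -slope1 slope2; field; rewrite a_neq0 b_neq0 T2_neq0.
- case=> g1 [g2 [T1 [T2 slope]]].
  have g_neq0 r (g : F) : relTr q n r g = 1 -> g != 0.
    by move=> Tg; apply/eqP => g0; move: Tg; rewrite g0 relTr0 => /eqP; rewrite eq_sym oner_eq0.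
  have one_neq0 : (1 : F) != 0 := oner_neq0 F.
  exists (g1, 1); split; [|split].
  + exists g1; split; first exact: g_neq0 T1.
    by apply/same_point_slope => //=; rewrite T1 mul1r.
  + exists g2; split; first exact: g_neq0 T2.
    apply/same_point_slope => //=; rewrite T2 mulr1 divr1 mulf_neq0 //; split=> //.
    by apply: (mulfI a_neq0); rewrite slope; field; rewrite a_neq0 b_neq0.
  + by case=> _ [_ [lam [_ [_ /eqP]]]]; rewrite mulr0 oner_eq0.
Qed.

(* Given a^(q^r1) = a and b^(q^r2) = b, the trace condition of the theorem can
   be sharpened to a g1 = g2 / b: split a g1 - g2/b into ker Tr_{r1} + ker Tr_{r2}
   and absorb the first part into g1 and the second into g2. *)
Lemma trace_condition_iff r1 r2 (a b : F) :
  (0 < r1)%N -> (0 < r2)%N -> (r1 %| n)%N -> (r2 %| n)%N -> coprime r1 r2 ->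
  a != 0 -> a ^+ (q ^ r1) = a -> b != 0 -> b ^+ (q ^ r2) = b ->
  (exists g1 g2 : F, relTr q n r1 g1 = 1 /\ relTr q n r2 g2 = 1 /\
      relTr q n 1 (a * g1 - g2 / b) = 0)
  <->
  (exists g1 g2 : F, relTr q n r1 g1 = 1 /\ relTr q n r2 g2 = 1 /\ a * g1 = g2 / b).
Proof.
move=> r1_gt0 r2_gt0 r1_dvd r2_dvd r12_coprime a_neq0 a_fixed b_neq0 b_fixed; split; last first.
  by case=> g1 [g2 [T1 [T2 slope]]]; exists g1, g2; rewrite slope subrr relTr0.
case=> g1 [g2 [T1 [T2 /(trace_kernel_decomp r1_gt0 r2_gt0 r1_dvd r2_dvd r12_coprime)]]].
case=> u1 [u2 [U1 [U2 /eqP]]]; rewrite subr_eq => /eqP split_eq.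
exists (g1 - u1 / a), (g2 + b * u2); split; [|split].
- by rewrite relTrB mulrC relTrZ ?exprVn ?a_fixed // U1 mulr0 subr0.
- by rewrite relTrD relTrZ ?b_fixed // U2 mulr0 addr0.
- by rewrite mulrBr split_eq; field; rewrite a_neq0 b_neq0.
Qed.

End FiniteField.

Theorem theorem3p4 (F : finFieldType) (q n r1 r2 : nat) (a b : F) :
  prime_power q -> (2 <= n)%N -> #|F| = (q ^ n)%N ->
  (0 < r1)%N -> (0 < r2)%N -> (r1 %| n)%N -> (r2 %| n)%N -> coprime r1 r2 ->
  a != 0 -> a ^+ (q ^ r1) = a -> b != 0 -> b ^+ (q ^ r2) = b ->
  (exists P : F * F,
      in_linset q n r1 1 P /\ in_linset q n r2 (a * b) P /\ ~ same_point P (1, 0))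
  <->
  (exists g1 g2 : F, relTr q n r1 g1 = 1 /\ relTr q n r2 g2 = 1 /\
      relTr q n 1 (a * g1 - g2 / b) = 0).
Proof.
move=> q_pp _ cardF r1_gt0 r2_gt0 r1_dvd r2_dvd r12_coprime a_neq0 a_fixed b_neq0 b_fixed.
by rewrite (common_point_iff q_pp cardF) // (trace_condition_iff q_pp cardF).
Qed.
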